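(* Let $n\ge 1$ be an integer and suppose that $A\subseteq\mathbb{Z}_5^n$ is a sum-free subset of size $|A|>\frac32\cdot5^{n-1}$. If $H<\mathbb{Z}_5^n$ is a maximal proper subgroup such that every $H$-coset $g+H$ satisfies $|A\cap(g+H)|<\frac12|H|$, then there is at most one $H$-coset $g+H$ with $|A\cap(g+H)|>\frac25|H|$.
   Context: $\mathbb{Z}_5^n$ denotes the elementary abelian $5$-group of rank $n$. A subset $S$ of an abelian group is sum-free if there are no $x,y,z\in S$ (not necessarily distinct) with $x+y=z$. *)

From mathcomp Require Import all_boot all_order all_algebra.
Set Implicit Arguments. Unset Strict Implicit. Unset Printing Implicit Defensive.
Import GRing.Theory.
Local Open Scope ring_scope.

Definition Z5n (n : nat) := 'rV['F_5]_n.

Definition is_subgroup n (H : {set Z5n n}) : Prop :=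
  0 \in H /\ (forall x y, x \in H -> y \in H -> x - y \in H).

Definition maximal_proper_subgroup n (H : {set Z5n n}) : Prop :=
  is_subgroup H /\ H != [set: Z5n n] /\
  (forall K : {set Z5n n}, is_subgroup K -> H \subset K ->
     K = H \/ K = [set: Z5n n]).

Definition coset n (g : Z5n n) (H : {set Z5n n}) : {set Z5n n} :=
  [set g + h | h in H].

Definition sum_free n (A : {set Z5n n}) : Prop :=
  forall x y z, x \in A -> y \in A -> z \in A -> x + y != z.

From mathcomp Require Import all_boot all_order all_algebra.
From mathcomp Require Import zify.
Set Implicit Arguments. Unset Strict Implicit. Unset Printing Implicit Defensive.
Import GRing.Theory.
Local Open Scope ring_scope.

(* Write a(g) = |A :&: (g + H)|.  A weak form of Kneser's theorem, proved with
   Dyson's e-transform, gives a nonempty X inside U + W with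
   |U| + |W| <= |X| + |Stab X|.  For U, W inside two H-cosets of a 5-group,
   |Stab X| divides both |X| and |H|, so |U| + |W| > 3|H|/5 forces
   |U + W| >= 3|H|/5.  Since A is sum-free, A :&: (a + H) + A :&: (b + H)
   misses A :&: (a + b + H), hence the sum of two heavy cosets (more than
   2|H|/5 elements of A) is light.  As H has index 5, a second heavy coset is
   k g1 + H with k in {2, 3, 4}; k = 2, 3 contradict the previous remark, and
   for k = 4 each of the pairs (0, g1), (4 g1, 2 g1), (g1, 3 g1) sums to a
   heavy coset, so a(x) + a(y) <= 3|H|/5 for each pair, whence
   |A| <= 9|H|/5 - a(g1) < 7|H|/5 <= (7/5) 5^(n-1) < (3/2) 5^(n-1). *)

Section Sumsets.
Variable V : finZmodType.
Implicit Types (I L P Q S T U W X Y : {set V}) (d g h x y z : V).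

Definition translate X g : {set V} := [set x + g | x in X].
Definition sumset P Q : {set V} := [set p + q | p in P, q in Q].
Definition stabilizer X : {set V} := [set d | translate X d \subset X].

Lemma mem_translate X g y : (y \in translate X g) = (y - g \in X).
Proof.
apply/imsetP/idP => [[x Xx ->]|Xy]; first by rewrite addrK.
by exists (y - g); rewrite ?subrK.
Qed.

Lemma card_translate X g : #|translate X g| = #|X|.
Proof. exact/card_imset/addIr. Qed.

Lemma translateAC X g h : translate (translate X g) h = translate (translate X h) g.
Proof. by apply/setP => y; rewrite !mem_translate addrAC. Qed.

Lemma translateK X g : translate (translate X g) (- g) = X.
Proof. by apply/setP => y; rewrite !mem_translate opprK addrK. Qed.

Lemma subset_translate2 Y Z g :
  (translate Y g \subset translate Z g) = (Y \subset Z).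
Proof.
apply/subsetP/subsetP => sYZ y.
  by move=> Yy; have := sYZ (y + g); rewrite !mem_translate addrK; apply.
by rewrite !mem_translate; apply: sYZ.
Qed.

Lemma mem_sumset P Q p q : p \in P -> q \in Q -> p + q \in sumset P Q.
Proof. by move=> Pp Qq; apply/imset2P; exists p q. Qed.

Lemma sumset_translater P Q h : sumset P (translate Q h) = translate (sumset P Q) h.
Proof.
apply/setP => y; rewrite mem_translate; apply/imset2P/imset2P => -[p q Pp Qq].
  by move=> ->; exists p (q - h); rewrite ?addrA // -mem_translate.
by move/(canRL (subrK h)) ->; exists p (q + h); rewrite ?addrA // mem_translate addrK.
Qed.

Lemma sumsetUI S T : sumset (S :|: T) (S :&: T) \subset sumset S T.
Proof.
apply/subsetP => _ /imset2P[p q + /setIP[Sq Tq] ->]; case/setUP => [Sp|Tp].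
  exact: mem_sumset.
by rewrite addrC mem_sumset.
Qed.

Lemma card_dvdn_periodic L X : zmod_closed L ->
  {in X & L, forall x d, x + d \in X} -> (#|L| %| #|X|)%N.
Proof.
move=> [L0 LB] XL; have [m] := ubnP #|X|; elim: m => // m IH in X XL *.
rewrite ltnS => leXm; have [->|[x Xx]] := set_0Vmem X; first by rewrite cards0.
have sLxX : translate L x \subset X.
  by apply/subsetP => _ /imsetP[d Ld ->]; rewrite addrC XL.
have cardX : #|X| = (#|L| + #|X :\: translate L x|)%N.
  by rewrite -(cardsID (translate L x) X) (setIidPr sLxX) card_translate.
rewrite cardX dvdn_addr // IH //.
  move=> y d /setDP[Xy Ly] Ld; apply/setDP; split; first exact: XL.
  apply: contra Ly; rewrite !mem_translate => Lydx.
  by rewrite -(addrK d y) addrAC LB.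
apply: leq_trans leXm; rewrite cardX -add1n leq_add2r.
by apply/card_gt0P; exists 0.
Qed.

Lemma translate_stabilizer X d : d \in stabilizer X -> translate X d = X.
Proof. by rewrite inE => sXd; apply/eqP; rewrite eqEcard sXd card_translate /=. Qed.

Lemma stabilizer_periodic X : {in X & stabilizer X, forall x d, x + d \in X}.
Proof. by move=> x d Xx /translate_stabilizer <-; rewrite mem_translate addrK. Qed.

Lemma stabilizer_zmod_closed X : zmod_closed (stabilizer X).
Proof.
split; first by rewrite inE; apply/subsetP => y; rewrite mem_translate subr0.
move=> d e Sd Se; rewrite inE; apply/subsetP => y; rewrite mem_translate => Xy.
have := stabilizer_periodic Xy Sd.
by rewrite -{1}(translate_stabilizer Se) mem_translate opprB addrA subrK addrK.
Qed.

Lemma stabilizer_translate X g : stabilizer (translate X g) = stabilizer X.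
Proof. by apply/setP => d; rewrite !inE translateAC subset_translate2. Qed.

Lemma translate_eq0 X g : (translate X g == set0) = (X == set0).
Proof. by rewrite -!cards_eq0 card_translate. Qed.

Lemma translate_subset_translate X S h :
  X \subset translate S h -> translate X (- h) \subset S.
Proof. by rewrite -{2}(translateK S h) subset_translate2. Qed.

Lemma sumset_e_transform P Q h :
  sumset (P :|: Q :|: translate (P :&: Q) h) ((P :|: Q) :&: translate (P :&: Q) h)
    \subset translate (sumset P Q) h.
Proof.
apply: subset_trans (sumsetUI _ _) _.
by rewrite sumset_translater subset_translate2 sumsetUI.
Qed.

Lemma card_le_stabilizer Y I (i0 : V) : i0 \in I ->
  (forall h, Y :&: translate I h != set0 -> translate I h \subset Y) ->
  (#|I| <= #|stabilizer Y|)%N.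
Proof.
move=> Ii0 closedYI; rewrite -(card_translate I (- i0)); apply/subset_leq_card.
apply/subsetP => d; rewrite mem_translate opprK => Idi0.
rewrite inE; apply/subsetP => z; rewrite mem_translate => Yzd.
have /closedYI/subsetP : Y :&: translate I (z - d - i0) != set0.
  by apply/set0Pn; exists (z - d); rewrite inE Yzd mem_translate opprB addrC subrK.
by apply; rewrite mem_translate opprB addrCA subKr addrC.
Qed.

(* Induction on |P :&: Q|: an e-transform by a translate I + h that meets
   P :|: Q without being contained in it decreases the intersection; when
   there is none, (P :&: Q) - i0 stabilizes P :|: Q. *)
Lemma periodic_subset_sumset_meet P Q : P :&: Q != set0 ->
  exists X, [/\ X != set0, X \subset sumset P Q
              & (#|P| + #|Q| <= #|X| + #|stabilizer X|)%N].
Proof.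
have [m] := ubnP #|P :&: Q|; elim: m => // m IH in P Q *.
rewrite ltnS => leIm nI; set I := P :&: Q; set Y := P :|: Q.
have cardYI : (#|Y| + #|I| = #|P| + #|Q|)%N by rewrite cardsUI.
have [h /andP[nYT ltYT]|full] :=
  pickP (fun h => (Y :&: translate I h != set0) && (#|Y :&: translate I h| < #|I|)%N).
  set T := translate I h in nYT ltYT *.
  have UI_YT : (Y :|: T) :&: (Y :&: T) = Y :&: T.
    by apply/setIidPr; rewrite (subset_trans (subsetIl _ _) (subsetUl _ _)).
  have := IH (Y :|: T) (Y :&: T); rewrite UI_YT.
  case=> [||X [nX sX leX]]; [exact: leq_trans ltYT leIm | exact: nYT |].
  exists (translate X (- h)); rewrite card_translate stabilizer_translate.
  split; first by rewrite translate_eq0.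
    exact/translate_subset_translate/(subset_trans sX)/sumset_e_transform.
  by rewrite -cardYI -(card_translate I h) -cardsUI.
have [i0 Ii0] := set0Pn _ nI.
exists (translate Y i0); rewrite card_translate stabilizer_translate; split.
- rewrite translate_eq0; apply/set0Pn; exists i0.
  by move: Ii0; rewrite !inE => /andP[->].
- apply/subsetP => _ /imsetP[y Yy ->].
  exact/(subsetP (sumsetUI P Q))/mem_sumset.
rewrite -cardYI leq_add2l.
apply: (card_le_stabilizer Ii0) => h nYT.
have /= := full h; rewrite nYT /= => /negbT; rewrite -leqNgt => leIYT.
have /eqP <- : Y :&: translate I h == translate I h.
  by rewrite eqEcard subsetIr card_translate.
exact: subsetIl.
Qed.

Lemma periodic_subset_sumset U W : U != set0 -> W != set0 ->
  exists X, [/\ X != set0, X \subset sumset U W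
              & (#|U| + #|W| <= #|X| + #|stabilizer X|)%N].
Proof.
move=> /set0Pn[u Uu] /set0Pn[w Ww].
have UWu : U :&: translate W (u - w) != set0.
  by apply/set0Pn; exists u; rewrite inE Uu mem_translate opprB addrC subrK.
have [X [nX sX leX]] := periodic_subset_sumset_meet UWu.
exists (translate X (- (u - w))); rewrite card_translate stabilizer_translate.
split; first by rewrite translate_eq0.
  by apply: translate_subset_translate; rewrite -sumset_translater.
by rewrite -(card_translate W (u - w)).
Qed.

End Sumsets.

Lemma leq_of_dvdn_ltn_add d a b : (d %| a -> d %| b -> a < b + d -> a <= b)%N.
Proof.
move=> /dvdnP[a' ->] /dvdnP[b' ->]; rewrite -mulSnr ltn_mul2r ltnS => /andP[_ le].
by rewrite leq_mul2r le orbT.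
Qed.

Lemma dvdn_pfactor_eq_or_dvdn p j d : prime p -> (d %| p ^ j)%N ->
  d = (p ^ j)%N \/ (p * d %| p ^ j)%N.
Proof.
move=> p_pr /(dvdn_pfactor _ _ p_pr)[i]; rewrite leq_eqVlt => /predU1P[-> -> | lt_ij ->].
  by left.
by right; rewrite -expnS dvdn_exp2l.
Qed.

Lemma card_bigcup_le (T I : finType) (P : pred I) (F : I -> {set T}) :
  (#|\bigcup_(i | P i) F i| <= \sum_(i | P i) #|F i|)%N.
Proof.
elim/big_rec2: _ => [|i U s _ leUs]; first by rewrite cards0.
by rewrite cardsU (leq_trans (leq_subr _ _)) // leq_add2l.
Qed.

Section Z5n.
Variable n : nat.
Implicit Types (A H L U W X : {set Z5n n}) (a b g x y z : Z5n n).

Lemma mulrn5 g : g *+ 5 = 0.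
Proof. by rewrite -scaler_nat (_ : 5%:R = 0 :> 'F_5) ?scale0r //; apply/val_inj. Qed.

Lemma mulrn_mod5 g m : g *+ (m %% 5) = g *+ m.
Proof. by rewrite {2}(divn_eq m 5) mulrnDr mulrnA mulrn5 add0r. Qed.

Lemma card_Z5n : #|[set: Z5n n]| = (5 ^ n)%N.
Proof. by rewrite cardsT card_mx card_Fp // mul1n. Qed.

Lemma card_subgroup_Z5n L : is_subgroup L -> exists2 k, (k <= n)%N & #|L| = (5 ^ k)%N.
Proof.
move=> L_sub; apply/(dvdn_pfactor _ _ (isT : prime 5)); rewrite -card_Z5n.
by apply: card_dvdn_periodic => // x d _ _; rewrite inE.
Qed.

Lemma card_maximal_subgroup_le H : maximal_proper_subgroup H -> (#|H| <= 5 ^ n.-1)%N.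
Proof.
move=> [H_sub [HneT _]]; have [k le_kn cardH] := card_subgroup_Z5n H_sub.
have lt_kn : (k < n)%N.
  rewrite ltn_neqAle le_kn andbT; apply: contraNneq HneT => eq_kn.
  by rewrite eqEcard subsetT card_Z5n cardH eq_kn /=.
by rewrite cardH leq_pexp2l //; lia.
Qed.

Lemma mem_coset g H x : (x \in coset g H) = (x - g \in H).
Proof.
apply/imsetP/idP => [[h Hh ->]|Hx]; first by rewrite addrC addKr.
by exists (x - g); rewrite // addrC subrK.
Qed.

Lemma card_coset g H : #|coset g H| = #|H|.
Proof. exact/card_imset/addrI. Qed.

Section Subgroup.
Variable H : {set Z5n n}.
Hypothesis H_sub : is_subgroup H.

Let subH : {in H &, forall x y, x - y \in H} := H_sub.2.
Let addH : {in H &, forall x y, x + y \in H} := (GRing.zmod_closedD H_sub).2.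

Lemma coset_eq a b : a - b \in H -> coset a H = coset b H.
Proof.
move=> Hab; apply/setP => x; rewrite !mem_coset; apply/idP/idP => Hx.
  by rewrite -(subrK a x) -addrA addH.
by rewrite -(subrK b x) -addrA -[b - a]opprB subH.
Qed.

Lemma sumset_sub_coset a b U W :
  U \subset coset a H -> W \subset coset b H -> sumset U W \subset coset (a + b) H.
Proof.
move=> /subsetP sUa /subsetP sWb; apply/subsetP => _ /imset2P[u w Uu Ww ->].
by rewrite mem_coset opprD addrACA addH // -mem_coset ?sUa ?sWb.
Qed.

Lemma card_sumset_in_cosets a b U W :
  U \subset coset a H -> W \subset coset b H -> U != set0 -> W != set0 ->
  (3 * #|H| < 5 * (#|U| + #|W|))%N -> (3 * #|H| <= 5 * #|sumset U W|)%N.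
Proof.
move=> sUa sWb nU nW ltHUW.
have [X [nX sXUW leUWX]] := periodic_subset_sumset nU nW.
have sXab := subset_trans sXUW (sumset_sub_coset sUa sWb).
set L := stabilizer X in leUWX.
have sLH : L \subset H.
  apply/subsetP => d Ld; have [x Xx] := set0Pn _ nX.
  have xdH : x + d - (a + b) \in H.
    by rewrite -mem_coset (subsetP sXab) ?stabilizer_periodic.
  have xH : x - (a + b) \in H by rewrite -mem_coset (subsetP sXab).
  by have := subH xdH xH; rewrite opprB addrA subrK addrC addKr.
have dvd_LX : (#|L| %| #|X|)%N.
  exact: card_dvdn_periodic (stabilizer_zmod_closed X) (@stabilizer_periodic _ X).
have dvd_LH : (#|L| %| #|H|)%N.
  apply: card_dvdn_periodic (stabilizer_zmod_closed X) _ => h d Hh Ld.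
  exact: addH Hh (subsetP sLH d Ld).
have [j _ cardH] := card_subgroup_Z5n H_sub.
have X_gt0 : (0 < #|X|)%N by rewrite card_gt0.
apply: (@leq_trans (5 * #|X|)); last by rewrite leq_mul2l subset_leq_card ?orbT.
move: dvd_LH; rewrite cardH => /(dvdn_pfactor_eq_or_dvdn (isT : prime 5))[cardL|].
  by have := dvdn_leq X_gt0 dvd_LX; rewrite cardL -cardH; lia.
move=> dvd_5L; apply: (@leq_of_dvdn_ltn_add (5 * #|L|)).
- by rewrite dvdn_mull.
- by rewrite dvdn_pmul2l.
- by rewrite -mulnDr -cardH (leq_trans ltHUW) // leq_mul2l leUWX orbT.
Qed.

End Subgroup.

Lemma maximal_subgroup_cover H g : maximal_proper_subgroup H -> g \notin H ->
  forall x, exists k : 'I_5, x \in coset (g *+ k) H.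
Proof.
move=> [[H0 subH] [_ maxH]] gH x.
set K := [set y | [exists k : 'I_5, y \in coset (g *+ k) H]].
have K_sub : is_subgroup K.
  split; first by rewrite inE; apply/existsP; exists ord0; rewrite mem_coset subrr.
  move=> y z /[!inE] /existsP[k yk] /existsP[l zl]; apply/existsP.
  exists (inZp (k + (5 - l))); rewrite mem_coset mulrn_mod5 mulrnDr.
  rewrite mulrnBr ?mulrn5 ?sub0r 1?ltnW //.
  have -> : y - z - (g *+ k - g *+ l) = (y - g *+ k) - (z - g *+ l).
    by rewrite !opprB addrACA [RHS]addrACA [- z + _]addrC.
  by rewrite subH -?mem_coset.
have HK : H \subset K.
  apply/subsetP => y Hy; rewrite inE; apply/existsP; exists ord0.
  by rewrite mem_coset subr0.
have gK : g \in K.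
  by rewrite inE; apply/existsP; exists (inZp 1); rewrite mem_coset subrr.
case: (maxH K K_sub HK) => KE; first by rewrite -KE gK in gH.
by have := in_setT x; rewrite -KE inE => /existsP.
Qed.

End Z5n.

Section SumFreeSet.
Variables (n : nat) (A H : {set Z5n n}).
Hypotheses (H_max : maximal_proper_subgroup H) (A_sum_free : sum_free A).
Hypothesis A_sparse : forall g : Z5n n, (2 * #|A :&: coset g H| < #|H|)%N.
Implicit Types (a b g : Z5n n).

Local Notation cnt g := #|A :&: coset g%R H|.
Local Notation heavy g := (2 * #|H| < 5 * cnt g)%N.

Let H_sub : is_subgroup H := H_max.1.

Lemma sum_free_cnt_bound a b : heavy (a + b) -> (5 * (cnt a + cnt b) <= 3 * #|H|)%N.
Proof.
move=> heavy_ab; rewrite leqNgt; apply/negP => big_ab.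
have nonempty c d : (3 * #|H| < 5 * (cnt c + cnt d))%N -> A :&: coset c H != set0.
  move=> big_cd; apply/negP => /eqP Ac0; move: big_cd; rewrite Ac0 cards0.
  by have := A_sparse d; lia.
have nAa : A :&: coset a H != set0 := nonempty a b big_ab.
have nAb : A :&: coset b H != set0 by apply: (nonempty b a); rewrite addnC.
have big_S := card_sumset_in_cosets H_sub (subsetIr A _) (subsetIr A _) nAa nAb big_ab.
set S := sumset _ _ in big_S.
have disj_S_A : S :&: (A :&: coset (a + b) H) = set0.
  apply/setP => z; rewrite inE in_set0; apply/negP => /andP[].
  case/imset2P => x y /setIP[Ax _] /setIP[Ay _] -> /setIP[Axy _].
  by have := A_sum_free Ax Ay Axy; rewrite eqxx.
have : (#|S :|: (A :&: coset (a + b)%R H)| <= #|H|)%N.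
  rewrite -(card_coset (a + b)%R) subset_leq_card // subUset subsetIr andbT.
  by apply: sumset_sub_coset => //; apply: subsetIr.
have -> : #|S :|: (A :&: coset (a + b) H)| = (#|S| + cnt (a + b))%N.
  by rewrite cardsU disj_S_A cards0 subn0.
lia.
Qed.

Lemma heavy_add_light a b : heavy a -> heavy b -> ~~ heavy (a + b).
Proof. by move=> heavy_a heavy_b; apply/negP => /sum_free_cnt_bound; lia. Qed.

Lemma card_le_sum_cosets g : g \notin H -> (#|A| <= \sum_(k < 5) cnt (g *+ k))%N.
Proof.
move=> gH; apply: leq_trans (card_bigcup_le _ _); apply/subset_leq_card/subsetP => x Ax.
have [k xk] := maximal_subgroup_cover H_max gH x.
by apply/bigcupP; exists k; rewrite // inE Ax.
Qed.

Lemma heavy_cosets_eq_or_small g1 g2 : heavy g1 -> heavy g2 ->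
  coset g1 H = coset g2 H \/ (5 * #|A| < 7 * #|H|)%N.
Proof.
move=> heavy1 heavy2.
have light k l : heavy (g1 *+ k) -> heavy (g1 *+ l) -> ~~ heavy (g1 *+ ((k + l) %% 5)%N).
  by rewrite mulrn_mod5 mulrnDr; apply: heavy_add_light.
have bound k l : heavy (g1 *+ ((k + l) %% 5)%N) ->
    (5 * (cnt (g1 *+ k) + cnt (g1 *+ l)) <= 3 * #|H|)%N.
  by rewrite mulrn_mod5 mulrnDr; apply: sum_free_cnt_bound.
have g1H : g1 \notin H.
  apply/negP => Hg1; case/negP: (light 1 1 heavy1 heavy1).
  have g1_2 : g1 *+ (1 + 1) - g1 \in H by rewrite mulrnDr mulr1n addrK.
  by rewrite mulrn_mod5 (coset_eq H_sub g1_2).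
have [k g2k] := maximal_subgroup_cover H_max g1H g2.
have -> : coset g2 H = coset (g1 *+ k) H by apply: coset_eq; rewrite -?mem_coset.
rewrite (coset_eq H_sub (_ : g2 - g1 *+ k \in H)) -?mem_coset // in heavy2.
case: k {g2k} heavy2 => -[|[|[|[|[|//]]]]] ? heavy2.
- by case/negP: (light 0 0 heavy2 heavy2).
- by left.
- by case/negP: (light 1 1 heavy1 heavy1).
- by case/negP: (light 3 3 heavy2 heavy2).
right.
have sumA : (#|A| <= cnt (g1 *+ 0%N) + cnt (g1 *+ 1%N) + cnt (g1 *+ 2%N)
                     + cnt (g1 *+ 3%N) + cnt (g1 *+ 4%N))%N.
  apply: leq_trans (card_le_sum_cosets g1H) _.
  by rewrite !big_ord_recl big_ord0 addn0 !addnA.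
have := bound 0%N 1%N heavy1; have := bound 4%N 2%N heavy1; have := bound 1%N 3%N heavy2.
have : heavy (g1 *+ 1%N) := heavy1.
lia.
Qed.

End SumFreeSet.

Theorem proposition3 (n : nat) (A H : {set Z5n n}) :
  (1 <= n)%N ->
  sum_free A ->
  (3 * 5 ^ n.-1 < 2 * #|A|)%N ->
  maximal_proper_subgroup H ->
  (forall g : Z5n n, 2 * #|A :&: coset g H| < #|H|)%N ->
  forall g1 g2 : Z5n n,
    (2 * #|H| < 5 * #|A :&: coset g1 H|)%N ->
    (2 * #|H| < 5 * #|A :&: coset g2 H|)%N ->
    coset g1 H = coset g2 H.
Proof.
move=> _ A_sum_free big_A H_max A_sparse g1 g2 heavy1 heavy2.
have [//|small_A] := heavy_cosets_eq_or_small H_max A_sum_free A_sparse heavy1 heavy2.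
by have := card_maximal_subgroup_le H_max; lia.
Qed.
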